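(* Under the rank assumptions stated in the context, let $S_{jk}:=\{y+s v_j+t v_k: y\in \mathrm{relint}(F_{jk}), s> 0, t> 0\}$ for $1\leq j< k\leq d$ such that $F_{jk}$ is a facet of $F_j$. Then $S_{jk}\cap S_{j'k'}=\emptyset$ for any $\{ j,k \}\neq \{ j',k' \}$.
   Context: Let $d\geq 3$, let $v_1,\dots,v_d\in\mathbb{R}^d$ be distinct unit vectors and $b_1,\dots,b_d$ real numbers, and let $A=\{x\in \mathbb{R}^d:\ x\cdot v_j\leq b_j\ \text{for}\ j=1,\dots, d\}$ be a (possibly unbounded) convex polytope. For each $j$, $F_j$ denotes the (possible) facet of $A$ corresponding to $v_j$ (the part of $A$ on the hyperplane $\{x: x\cdot v_j=b_j\}$), and $F_{jk}=F_{kj}$ denotes the facet of the $(d-1)$-dimensional polytope $F_j$ created by intersecting with $F_k$, $k\neq j$; $\mathrm{relint}$ denotes relative interior. The following rank assumptions are imposed: for any $1\leq j<k\leq d$, if $\operatorname{rank} \begin{bmatrix} v_j & v_k \end{bmatrix}<2$, then $\operatorname{rank} \begin{bmatrix} v_j & v_k\end{bmatrix}<\operatorname{rank} \begin{bmatrix} v_j & v_k\\ b_j&b_k \end{bmatrix}$; for any $1\leq j<k<l\leq d$, if $\operatorname{rank} \begin{bmatrix} v_j & v_k & v_l\end{bmatrix}<3$, then $\operatorname{rank} \begin{bmatrix} v_j & v_k & v_l\end{bmatrix}<\operatorname{rank} \begin{bmatrix} v_j & v_k & v_l\\ b_j&b_k&b_l \end{bmatrix}$; for any $1\leq j<k<l<s\leq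 d$, if $\operatorname{rank} \begin{bmatrix} v_j & v_k & v_l& v_s\end{bmatrix}<4$, then $\operatorname{rank} \begin{bmatrix} v_j & v_k & v_l& v_s\end{bmatrix}<\operatorname{rank} \begin{bmatrix} v_j & v_k & v_l& v_s\\ b_j&b_k&b_l&b_s \end{bmatrix}$. *)

From HB Require Import structures.
From mathcomp Require Import all_boot all_order all_algebra.
From mathcomp Require Import reals.
Set Implicit Arguments. Unset Strict Implicit. Unset Printing Implicit Defensive.
Import Order.TTheory GRing.Theory Num.Theory.
Local Open Scope ring_scope.

Section Defs.
Variables (R : realType) (d : nat).
Notation vec := 'rV[R]_d.

Definition dotv (x y : vec) : R := (x *m y^T) 0 0.

Definition aff_hull (C : vec -> Prop) (y : vec) : Prop :=
  exists (n : nat) (p : 'I_n -> vec) (w : 'I_n -> R),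
    (forall i, C (p i)) /\ \sum_(i < n) w i = 1 /\ y = \sum_(i < n) w i *: p i.

Definition relint (C : vec -> Prop) (x : vec) : Prop :=
  C x /\ exists eps : R, 0 < eps /\
    forall y, aff_hull C y -> dotv (y - x) (y - x) < eps ^+ 2 -> C y.

Definition aff_indep (n : nat) (p : 'I_n.+1 -> vec) : bool :=
  row_free (\matrix_(i < n) (p (lift ord0 i) - p ord0)).

Definition has_affdim (C : vec -> Prop) (n : nat) : Prop :=
  (exists p : 'I_n.+1 -> vec, (forall i, C (p i)) /\ aff_indep p) /\
  ~ (exists p : 'I_n.+2 -> vec, (forall i, C (p i)) /\ aff_indep p).

Definition is_facet_of (G C : vec -> Prop) : Prop :=
  (exists (w : vec) (c : R), (forall x, C x -> dotv x w <= c) /\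
      (forall x, G x <-> (C x /\ dotv x w = c))) /\
  exists n : nat, has_affdim C n.+1 /\ has_affdim G n.

Variables (v : 'I_d -> vec) (b : 'I_d -> R).

Definition polyA (x : vec) : Prop := forall j, dotv x (v j) <= b j.
Definition Fac (j : 'I_d) (x : vec) : Prop := polyA x /\ dotv x (v j) = b j.
Definition Fac2 (j k : 'I_d) (x : vec) : Prop := Fac j x /\ Fac k x.

(* Rank assumption for m-element index sets j_1 < ... < j_m:
   rank [v_j1 ... v_jm] < m  ->  rank [v..] < rank [v..; b..].
   Matrices are written with rows v_ji (rank is transpose-invariant). *)
Definition rank_cond (m : nat) : Prop :=
  forall f : 'I_m -> 'I_d, (forall i i' : 'I_m, (i < i')%N -> (f i < f i')%N) ->
    let M := \matrix_(i < m) v (f i) in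
    let Maug := \matrix_(i < m) row_mx (v (f i)) (b (f i))%:M in
    (\rank M < m)%N -> (\rank M < \rank Maug)%N.

Definition Sset (j k : 'I_d) (z : vec) : Prop :=
  exists (y : vec) (s t : R), relint (Fac2 j k) y /\ 0 < s /\ 0 < t /\
    z = y + s *: v j + t *: v k.

End Defs.

From HB Require Import structures.
From mathcomp Require Import all_boot all_order all_algebra.
From mathcomp Require Import reals.
From mathcomp Require Import lra zify.
Import Order.TTheory GRing.Theory Num.Theory.
Local Open Scope ring_scope.
Set Implicit Arguments. Unset Strict Implicit.

(* If z = y + s v_j + t v_k with y in F_jk and s, t >= 0, then s v_j + t v_k
   is an outer normal of A at y, so y is the nearest point of A to z; hence two
   representations of z in S_jk and S_j'k' share the base point y.  Some
   l in {j', k'} lies outside {j, k}, and the facet inequality of v_l is tight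
   at y.  As y is relatively interior to F_jk, all of F_jk lies on that
   hyperplane, hence in three hyperplanes whose normals v_j, v_k, v_l are
   independent by the rank assumption for triples (y solves the system).  So
   dim F_jk <= d - 3, contradicting dim F_jk = dim F_j - 1 = d - 2. *)

Lemma uniq_increasing_enum (d : nat) (x0 : 'I_d) (s : seq 'I_d) : uniq s ->
  exists f : 'I_(size s) -> 'I_d,
    (forall i i' : 'I_(size s), (i < i')%N -> (f i < f i')%N) /\
    (forall i, f i \in s).
Proof.
move=> s_uniq; set s' := sort <=%O s.
have s'_sorted : sorted <%O s' by rewrite sort_lt_sorted.
have size_s' : size s' = size s by rewrite size_sort.
exists (fun i => nth x0 s' i); split => [i i' lt_ii'|i].
  have := sorted_ltn_nth lt_trans x0 s'_sorted i i'.
  by rewrite !inE size_s' !ltn_ord ltEord; apply.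
by rewrite -(mem_sort <=%O) mem_nth // size_s'.
Qed.

Lemma exists_index_notin (d : nat) (j k j' k' : 'I_d) :
  (j < k)%N -> (j' < k')%N -> ~ (j = j' /\ k = k') ->
  exists2 l, l \in [:: j'; k'] & l \notin [:: j; k].
Proof.
move=> lt_jk lt_jk' neq.
have [hj|j'_new] := boolP (j' \in [:: j; k]); last by exists j' => //; rewrite inE eqxx.
have [hk|k'_new] := boolP (k' \in [:: j; k]); last by exists k' => //; rewrite !inE eqxx orbT.
exfalso; move: hj hk lt_jk'; rewrite !inE => /orP[]/eqP ej'; case/orP=> /eqP ek';
  subst j' k'; rewrite ?ltnn //.
  by move=> _; apply: neq.
by rewrite ltnNge (ltnW lt_jk).
Qed.

Section DotProduct.
Variables (R : realType) (d : nat).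
Implicit Types x y z : 'rV[R]_d.

Lemma dotvE x y : dotv x y = \sum_c x 0 c * y 0 c.
Proof. by rewrite /dotv !mxE; apply: eq_bigr => c _; rewrite mxE. Qed.

Lemma dotvC x y : dotv x y = dotv y x.
Proof. by rewrite !dotvE; apply: eq_bigr => c _; rewrite mulrC. Qed.

Lemma dotvDl x y z : dotv (x + y) z = dotv x z + dotv y z.
Proof. by rewrite !dotvE -big_split; apply: eq_bigr => c _; rewrite mxE mulrDl. Qed.

Lemma dotvZl a x y : dotv (a *: x) y = a * dotv x y.
Proof. by rewrite !dotvE mulr_sumr; apply: eq_bigr => c _; rewrite mxE mulrA. Qed.

Lemma dotvNl x y : dotv (- x) y = - dotv x y.
Proof. by rewrite -scaleN1r dotvZl mulN1r. Qed.

Lemma dotvBl x y z : dotv (x - y) z = dotv x z - dotv y z.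
Proof. by rewrite dotvDl dotvNl. Qed.

Lemma dotvDr x y z : dotv z (x + y) = dotv z x + dotv z y.
Proof. by rewrite dotvC dotvDl !(dotvC z). Qed.

Lemma dotvZr a x y : dotv y (a *: x) = a * dotv y x.
Proof. by rewrite dotvC dotvZl dotvC. Qed.

Lemma dotvBr x y z : dotv z (x - y) = dotv z x - dotv z y.
Proof. by rewrite dotvC dotvBl !(dotvC z). Qed.

Lemma dotvv_ge0 x : 0 <= dotv x x.
Proof. by rewrite dotvE; apply: sumr_ge0 => c _; rewrite -expr2 sqr_ge0. Qed.

Lemma dotvv_eq0 x : (dotv x x == 0) = (x == 0).
Proof.
apply/idP/eqP => [|->]; last by rewrite dotvE big1 // => c _; rewrite mxE mul0r.
rewrite dotvE psumr_eq0 => [/allP x0|c _]; last by rewrite -expr2 sqr_ge0.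
apply/rowP => c; rewrite mxE; have := x0 c (mem_index_enum c).
by rewrite -expr2 sqrf_eq0 => /eqP.
Qed.

Lemma dotv_row m n (A : 'M[R]_(m, d)) (B : 'M[R]_(n, d)) i r :
  dotv (row i A) (row r B) = (A *m B^T) i r.
Proof. by rewrite dotvE !mxE; apply: eq_bigr => c _; rewrite !mxE. Qed.

End DotProduct.

Section Convexity.
Variables (R : realType) (d : nat).
Notation vec := 'rV[R]_d.
Implicit Types (C : vec -> Prop) (x y p w u : vec).

Lemma relint_supporting_eq C w c y p : (forall x, C x -> dotv x w <= c) ->
  relint C y -> dotv y w = c -> C p -> dotv p w = c.
Proof.
move=> Cw [Cy [eps [eps_gt0 ball_C]]] yw Cp.
apply/eqP; rewrite eq_le Cw //= leNgt; apply/negP => pw_lt.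
set N := dotv (y - p) (y - p).
have N_ge0 : 0 <= N := dotvv_ge0 _.
set e := eps / (N + 1).
have e_gt0 : 0 < e by rewrite divr_gt0 // ltr_wpDl.
have eN : e * (N + 1) = eps by rewrite /e mulfVK // gt_eqF // ltr_wpDl.
(* moving from [y] away from [p] stays in [C] for small [e],
   but crosses the hyperplane since [p] is strictly below it *)
set q := y + e *: (y - p).
have Cq : C q.
  apply: ball_C.
    exists 2%N, (fun i : 'I_2 => if val i == 0%N then y else p),
      (fun i : 'I_2 => if val i == 0%N then 1 + e else - e).
    split; first by case=> [[|[|]]].
    rewrite !big_ord_recl !big_ord0 /= !addr0; split; first by lra.
    by rewrite /q scalerDl scale1r scalerBr scaleNr addrA.
  have -> : q - y = e *: (y - p) by rewrite /q addrC addKr.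
  rewrite dotvZl dotvZr -/N -eN; nra.
by have := Cw q Cq; rewrite /q dotvDl dotvZl dotvBl yw; nra.
Qed.

Definition normal_vec C y u := forall x, C x -> dotv (x - y) u <= 0.

Lemma normal_vecD C y u u' :
  normal_vec C y u -> normal_vec C y u' -> normal_vec C y (u + u').
Proof. by move=> nu nu' x Cx; rewrite dotvDr; have := nu x Cx; have := nu' x Cx; lra. Qed.

Lemma normal_vec_inj C y y' u u' : C y -> C y' ->
  normal_vec C y u -> normal_vec C y' u' -> y + u = y' + u' -> y = y'.
Proof.
move=> Cy Cy' nu nu' E.
have Ey : y' - y = u - u'.
  by apply: (addIr u'); rewrite subrK addrAC -E addrAC subrr add0r.
have uy' := nu y' Cy'.
have u'y : 0 <= dotv (y' - y) u' by rewrite -oppr_le0 -dotvNl opprB nu'.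
have le0 : dotv (y' - y) (y' - y) <= 0 by rewrite {2}Ey dotvBr; lra.
have : dotv (y' - y) (y' - y) == 0 by rewrite eq_le le0 dotvv_ge0.
by rewrite dotvv_eq0 subr_eq0 => /eqP.
Qed.

End Convexity.

Section AffineDimension.
Variables (R : realType) (d : nat).
Notation vec := 'rV[R]_d.

Lemma row_free_rowsub m n p (f : 'I_m -> 'I_n) (A : 'M[R]_(n, p)) :
  injective f -> row_free A -> row_free (rowsub f A).
Proof.
move=> f_inj A_free; rewrite rowsubE /row_free mxrankMfree //.
apply/row_freeP; exists (rowsub f 1%:M)^T.
rewrite mul_rowsub_mx mul1mx; apply/matrixP => i i'.
by rewrite !mxE (inj_eq f_inj) eq_sym.
Qed.

Lemma aff_indep_widen m n (le_nm : (n <= m)%N) (p : 'I_m.+1 -> vec) :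
  aff_indep p -> aff_indep (fun i => p (widen_ord (le_nm : (n.+1 <= m.+1)%N) i)).
Proof.
move=> p_indep; rewrite /aff_indep.
set D := \matrix_(i < m) (p (lift ord0 i) - p ord0).
have -> : \matrix_(i < n) (p (widen_ord (le_nm : (n.+1 <= m.+1)%N) (lift ord0 i))
      - p (widen_ord (le_nm : (n.+1 <= m.+1)%N) ord0)) = rowsub (widen_ord le_nm) D.
  apply/matrixP => i c; rewrite !mxE.
  by congr (p _ _ _ - p _ _ _); apply: val_inj.
by apply: row_free_rowsub _ p_indep => i i' /(congr1 val) /= /val_inj.
Qed.

Lemma has_affdim_inj (C : vec -> Prop) m n :
  has_affdim C m -> has_affdim C n -> m = n.
Proof.
have affdim_le m' n' : has_affdim C m' -> has_affdim C n' -> (n' <= m')%N.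
  move=> [_ no_larger] [[p [Cp p_indep]] _]; rewrite leqNgt; apply/negP => lt_mn.
  apply: no_larger; exists (fun i => p (widen_ord (lt_mn : (m'.+2 <= n'.+1)%N) i)).
  by split=> [i|]; [exact: Cp | exact: aff_indep_widen].
by move=> Cm Cn; apply/eqP; rewrite eqn_leq !(affdim_le _ _ Cm Cn, affdim_le _ _ Cn Cm).
Qed.

Lemma row_free_orth_le n m (D : 'M[R]_(n, d)) (M : 'M[R]_(m, d)) :
  row_free D -> row_free M -> D *m M^T = 0 -> (n + m <= d)%N.
Proof.
move=> /eqP D_rank /eqP M_rank DM0.
have := mxrank_mul_min D M^T.
by rewrite DM0 mxrank0 mxrank_tr D_rank M_rank leqn0 subn_eq0.
Qed.

Lemma aff_indep_orth_le n m (p : 'I_n.+1 -> vec) (M : 'M[R]_(m, d)) (c : 'I_m -> R) :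
  aff_indep p -> row_free M -> (forall i r, dotv (p i) (row r M) = c r) ->
  (n + m <= d)%N.
Proof.
move=> p_indep M_free p_on; apply: row_free_orth_le p_indep M_free _.
by apply/matrixP => i r; rewrite -dotv_row rowK dotvBl !p_on subrr mxE.
Qed.

End AffineDimension.

Section Polytope.
Variables (R : realType) (d : nat) (v : 'I_d -> 'rV[R]_d) (b : 'I_d -> R).

Lemma Fac_normal j y s :
  Fac v b j y -> 0 <= s -> normal_vec (polyA v b) y (s *: v j).
Proof. by move=> [_ yj] s_ge0 x Ax; rewrite dotvZr dotvBl yj; have := Ax j; nra. Qed.

Lemma Fac2_normal j k y s t : Fac2 v b j k y -> 0 <= s -> 0 <= t ->
  normal_vec (polyA v b) y (s *: v j + t *: v k).
Proof. by move=> [Fj Fk] s_ge0 t_ge0; apply: normal_vecD; apply: Fac_normal. Qed.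

Lemma rank_cond_row_free m (f : 'I_m -> 'I_d) y : rank_cond v b m ->
  (forall i i' : 'I_m, (i < i')%N -> (f i < f i')%N) ->
  (forall i, dotv y (v (f i)) = b (f i)) -> row_free (\matrix_(i < m) v (f i)).
Proof.
move=> rc f_incr y_on; have /= := rc f f_incr.
set M := \matrix_(i < m) v (f i) => M_rank.
(* [y] solves the system, so the augmented matrix factors through [M] *)
have Maug : \matrix_(i < m) row_mx (v (f i)) (b (f i))%:M = M *m row_mx 1%:M y^T.
  rewrite mul_mx_row mulmx1; apply/matrixP => i c; rewrite mxE.
  rewrite -[c]splitK; case: (split c) => c'; rewrite ?row_mxEl ?row_mxEr.
    by rewrite mxE.
  by rewrite (ord1 c') [LHS]mxE mulr1n -dotv_row rowK row_id dotvC y_on.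
rewrite Maug in M_rank.
apply/eqP/anti_leq; rewrite rank_leq_row leqNgt; apply/negP => /M_rank.
by rewrite ltnNge mxrankM_maxl.
Qed.

Lemma Fac2_base_eq j k j' k' y y' s t s' t' :
  Fac2 v b j k y -> Fac2 v b j' k' y' -> 0 <= s -> 0 <= t -> 0 <= s' -> 0 <= t' ->
  y + s *: v j + t *: v k = y' + s' *: v j' + t' *: v k' -> y = y'.
Proof.
move=> Fy Fy' s_ge0 t_ge0 s'_ge0 t'_ge0 E.
apply: (normal_vec_inj Fy.1.1 Fy'.1.1 (Fac2_normal Fy s_ge0 t_ge0)
  (Fac2_normal Fy' s'_ge0 t'_ge0)).
by rewrite !addrA.
Qed.

Lemma Fac2_affdim_tight (j k l : 'I_d) y n : rank_cond v b 3 -> (j < k)%N ->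
  l \notin [:: j; k] -> relint (Fac2 v b j k) y -> dotv y (v l) = b l ->
  has_affdim (Fac2 v b j k) n -> (n + 3 <= d)%N.
Proof.
move=> rc3 lt_jk l_new y_relint y_l [[p [Fp p_indep]] _].
have Fjk_l := relint_supporting_eq (fun x (Fx : Fac2 v b j k x) => Fx.1.1 l) y_relint y_l.
have ljk_uniq : uniq [:: l; j; k] by rewrite /= l_new inE neq_ltn lt_jk.
have [f [f_incr f_ljk]] := uniq_increasing_enum l ljk_uniq.
have on_ljk x : Fac2 v b j k x -> forall i, dotv x (v (f i)) = b (f i).
  move=> Fx i; have := f_ljk i; rewrite !inE => /or3P[]/eqP->.
  - exact: Fjk_l.
  - exact: Fx.1.2.
  - exact: Fx.2.2.
have M_free := rank_cond_row_free rc3 f_incr (on_ljk y y_relint.1).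
have p_on i r : dotv (p i) (row r (\matrix_i v (f i))) = b (f r).
  by rewrite rowK on_ljk.
exact: aff_indep_orth_le p_indep M_free p_on.
Qed.

End Polytope.

Theorem lemma6p3 (R : realType) (d : nat) (v : 'I_d -> 'rV[R]_d) (b : 'I_d -> R) :
  (3 <= d)%N ->
  injective v ->
  (forall j, dotv (v j) (v j) = 1) ->
  rank_cond v b 2 -> rank_cond v b 3 -> rank_cond v b 4 ->
  forall j k j' k' : 'I_d,
    (j < k)%N -> (j' < k')%N ->
    has_affdim (Fac v b j) d.-1 -> is_facet_of (Fac2 v b j k) (Fac v b j) ->
    has_affdim (Fac v b j') d.-1 -> is_facet_of (Fac2 v b j' k') (Fac v b j') ->
    ~ (j = j' /\ k = k') ->
    forall z, ~ (Sset v b j k z /\ Sset v b j' k' z).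
Proof.
move=> _ _ _ _ rc3 _ j k j' k' lt_jk lt_jk' dimFj [_ [n [dimFj' dimFjk]]] _ _ neq z
  [[y [s [t [y_relint [s_gt0 [t_gt0 ->]]]]]] [y' [s' [t' [[Fy' _] [s'_gt0 [t'_gt0 E]]]]]]].
have yy' : y = y'.
  by apply: Fac2_base_eq y_relint.1 Fy' _ _ _ _ E; apply: ltW.
have [l l_new l_old] := exists_index_notin lt_jk lt_jk' neq.
have y_l : dotv y (v l) = b l.
  by rewrite yy'; move: l_new; rewrite !inE; case/orP=> /eqP->; [case: Fy'.1 | case: Fy'.2].
have := Fac2_affdim_tight rc3 lt_jk l_old y_relint y_l dimFjk.
have := has_affdim_inj dimFj dimFj'.
lia.
Qed.
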